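(* Let $k \ge 1$, $m = 4k+4$, $\theta = 2\pi/m$, and let $P$ be a finite point set in general position. For any two vertices $u, w \in P$, let $M$ be the midpoint of the side of $T_{uw}$ opposite $u$ and let $\alpha$ be the unsigned angle between $uw$ and $uM$. Then the $\theta_m$-graph on $P$ contains a path from $u$ to $w$ of length at most $$\left(\frac{\cos\alpha}{\cos(\theta/2)} + \frac{\cos\alpha\tan(\theta/2) + \sin\alpha}{\cos(\theta/2) - \sin(\theta/2)}\right)|uw|.$$
   Context: Cones: for $m \ge 2$, $\theta = 2\pi/m$; around each point $u$ draw $m$ rays with consecutive angular separation $\theta$, oriented so the vertical upward ray from $u$ bisects a cone $C_0^u$; cones numbered $C_0^u,\dots,C_{m-1}^u$ clockwise, same orientation at every point. General position: no two points on a line parallel to a cone boundary ray, no two on a line perpendicular to a cone bisector, no three collinear. The $\theta_m$-graph on $P$: for each $u\in P$ and each cone $C_i^u$ containing another point of $P$, add an edge from $u$ to the point of $C_i^u$ whose orthogonal projection onto the bisector of $C_i^u$ is closest to $u$; edges weighted by Euclidean length. Canonical triangle: if $w$ lies in cone $C$ of $u$, $T_{uw}$ is the triangle bounded by the two boundary rays of $C$ and the line through $w$ perpendicular to the bisector of $C$. *)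

From Stdlib Require Import Reals Lra List.
Open Scope R_scope.

Definition pt := (R * R)%type.

Definition sub (p q : pt) : pt := (fst p - fst q, snd p - snd q).
Definition dot (p q : pt) : R := fst p * fst q + snd p * snd q.
Definition cross (p q : pt) : R := fst p * snd q - snd p * fst q.
Definition edist (p q : pt) : R := sqrt (dot (sub p q) (sub p q)).

Definition theta (m : nat) : R := 2 * PI / INR m.

(* Direction of the bisector of cone C_i: C_0 is bisected by the upward
   vertical ray, cones numbered clockwise, so the bisector of C_i has
   (counterclockwise, from the positive x-axis) angle pi/2 - i*theta. *)
Definition bis_angle (m i : nat) : R := PI / 2 - INR i * theta m.
Definition bis (m i : nat) : pt := (cos (bis_angle m i), sin (bis_angle m i)).

Definition ray_dir (m j : nat) : pt :=
  (cos (PI / 2 + theta m / 2 - INR j * theta m),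
   sin (PI / 2 + theta m / 2 - INR j * theta m)).

Definition proj (m i : nat) (u v : pt) : R := dot (sub v u) (bis m i).

(* v lies in cone C_i^u (closed cone of half-angle theta/2 around the
   bisector; boundary points are excluded anyway by general position). *)
Definition in_cone (m i : nat) (u v : pt) : Prop :=
  (i < m)%nat /\ v <> u /\ proj m i u v >= edist u v * cos (theta m / 2).

Definition general_position (m : nat) (P : list pt) : Prop :=
  (forall p q, In p P -> In q P -> p <> q ->
     forall j, (j < m)%nat -> cross (sub q p) (ray_dir m j) <> 0) /\
  (forall p q, In p P -> In q P -> p <> q ->
     forall i, (i < m)%nat -> dot (sub q p) (bis m i) <> 0) /\
  (forall p q r, In p P -> In q P -> In r P -> p <> q -> q <> r -> p <> r ->
     cross (sub q p) (sub r p) <> 0).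

Definition theta_arc (m : nat) (P : list pt) (u w : pt) : Prop :=
  exists i, In w P /\ in_cone m i u w /\
    forall v, In v P -> in_cone m i u v -> proj m i u w <= proj m i u v.

Definition theta_edge (m : nat) (P : list pt) (u w : pt) : Prop :=
  In u P /\ (theta_arc m P u w \/ theta_arc m P w u).

Fixpoint walk (E : pt -> pt -> Prop) (x : pt) (l : list pt) : Prop :=
  match l with
  | nil => True
  | y :: l' => E x y /\ walk E y l'
  end.

Fixpoint path_length (x : pt) (l : list pt) : R :=
  match l with
  | nil => 0
  | y :: l' => edist x y + path_length y l'
  end.

Definition theta_path (m : nat) (P : list pt) (u w : pt) (l : list pt) : Prop :=
  walk (theta_edge m P) u l /\ NoDup (u :: l) /\ last l u = w.

(* Unsigned angle between uw and uM, where M = u + proj * bis is the midpoint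
   of the side of T_uw opposite u (w in cone i of u). *)
Definition alpha_angle (m i : nat) (u w : pt) : R :=
  acos (proj m i u w / edist u w).

Definition stretch_bound (m : nat) (a : R) : R :=
  cos a / cos (theta m / 2) +
  (cos a * tan (theta m / 2) + sin a) / (cos (theta m / 2) - sin (theta m / 2)).

(* For [w] in cone [i] of [u], let [H] and [X] be the coordinates of [w - u]
   along and across the bisector; the claimed bound is
   [(H + |X|) / (cos (θ/2) - sin (θ/2))].  Route greedily: from [u] go to the
   closest point [a] of the cone, then on from [a] inside the cone of [a] that
   contains [w].  Since [m = 4 K], rotating the frame by a multiple of [θ] never
   decreases [H + |X|] for a vector lying in its own cone, so the bound at [a]
   plus [|ua|] is at most the bound at [u].  Finitely many bound values make the
   induction terminate, and erasing loops turns the walk into a path. *)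

From Stdlib Require Import Reals Lra Lia Psatz List ZArith Classical.
Open Scope R_scope.

Lemma sin_cos_sq x : sin x * sin x + cos x * cos x = 1.
Proof. pose proof (sin2_cos2 x) as H. unfold Rsqr in H. exact H. Qed.

Lemma Rabs_sub_le x y : Rabs (x - y) <= Rabs x + Rabs y.
Proof. unfold Rminus. rewrite <- (Rabs_Ropp y). apply Rabs_triang. Qed.

Lemma polar_angle p q : p * p + q * q = 1 ->
  exists psi, - PI <= psi <= PI /\ cos psi = p /\ sin psi = q.
Proof.
  intro Hpq. assert (Hp : -1 <= p <= 1) by nra.
  assert (Hq : sqrt (1 - p²) = Rabs q).
  { replace (1 - p²) with q² by (unfold Rsqr; lra). apply sqrt_Rsqr_abs. }
  pose proof (acos_bound p). pose proof PI_RGT_0.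
  destruct (Rle_dec 0 q).
  - exists (acos p). rewrite cos_acos, sin_acos, Hq, Rabs_pos_eq by lra. repeat split; lra.
  - exists (- acos p). rewrite cos_neg, sin_neg, cos_acos, sin_acos, Hq, Rabs_left by lra.
    repeat split; lra.
Qed.

Lemma cos_Rabs x : cos (Rabs x) = cos x.
Proof. unfold Rabs. destruct (Rcase_abs x); [apply cos_neg | reflexivity]. Qed.

Lemma cos_le_of_abs_le phi x : phi <= PI -> Rabs x <= phi -> cos phi <= cos x.
Proof.
  intros Hphi Hx. rewrite <- (cos_Rabs x). pose proof (Rabs_pos x).
  apply cos_decr_1; lra.
Qed.

Lemma abs_le_of_cos_le phi x : 0 <= phi <= PI -> Rabs x <= PI -> cos phi <= cos x ->
  Rabs x <= phi.
Proof.
  intros Hphi Hx Hcos. rewrite <- (cos_Rabs x) in Hcos. pose proof (Rabs_pos x).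
  destruct (Rle_dec (Rabs x) phi) as [|Hlt]; [assumption|].
  pose proof (cos_decreasing_1 phi (Rabs x)). lra.
Qed.

Lemma abs_sin_le_sin a x : a <= PI / 2 -> Rabs x <= a -> Rabs (sin x) <= sin a.
Proof.
  intros Ha Hx. pose proof PI_RGT_0. assert (- a <= x <= a) by (split_Rabs; lra).
  destruct (Rle_dec 0 x).
  - rewrite Rabs_pos_eq by (apply sin_ge_0; lra). apply sin_incr_1; lra.
  - rewrite <- Rabs_Ropp, <- sin_neg, Rabs_pos_eq by (apply sin_ge_0; lra).
    apply sin_incr_1; lra.
Qed.

Lemma sin_le_on_middle a y : 0 <= a <= PI / 2 -> a <= y <= PI - a -> sin a <= sin y.
Proof.
  intros Ha Hy. pose proof PI_RGT_0.
  destruct (Rle_dec y (PI / 2)).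
  - apply sin_incr_1; lra.
  - rewrite <- (sin_PI_x y). apply sin_incr_1; lra.
Qed.

Lemma abs_sin_add_IZR_PI y q : Rabs (sin (y + IZR q * PI)) = Rabs (sin y).
Proof.
  assert (Hs : sin (IZR q * PI) = 0) by (apply sin_eq_0_1; exists q; reflexivity).
  assert (Hc : Rabs (cos (IZR q * PI)) = 1).
  { pose proof (sin_cos_sq (IZR q * PI)) as H. rewrite Hs in H.
    unfold Rabs; destruct (Rcase_abs (cos (IZR q * PI))); nra. }
  rewrite sin_plus, Hs, Rmult_0_r, Rplus_0_r, Rabs_mult, Hc. ring.
Qed.

(* The shift [n PI / K] moves [x] either by a multiple of [PI] or at least
   [PI / (2 K)] away from the zeros of [sin]. *)
Lemma abs_sin_le_shift (K : nat) (n : Z) x : (1 <= K)%nat ->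
  Rabs x <= PI / (2 * INR K) -> Rabs (sin x) <= Rabs (sin (x + IZR n * PI / INR K)).
Proof.
  intros HK Hx. pose proof PI_RGT_0.
  assert (HK1 : 1 <= INR K) by (apply (le_INR 1); lia).
  assert (HKZ : (0 < Z.of_nat K)%Z) by lia.
  pose proof (Z.div_mod n (Z.of_nat K) ltac:(lia)) as Hdiv.
  pose proof (Z.mod_pos_bound n (Z.of_nat K) HKZ) as Hmod.
  set (q := (n / Z.of_nat K)%Z) in *. set (r := (n mod Z.of_nat K)%Z) in *.
  assert (Hshift : x + IZR n * PI / INR K = (x + IZR r * PI / INR K) + IZR q * PI).
  { rewrite Hdiv, plus_IZR, mult_IZR, <- INR_IZR_INZ. field. lra. }
  rewrite Hshift, abs_sin_add_IZR_PI.
  assert (Hhalf : PI / (2 * INR K) <= PI / 2).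
  { apply Rmult_le_compat_l; [lra|]. apply Rinv_le_contravar; lra. }
  assert (Hh0 : 0 < PI / (2 * INR K)) by (apply Rdiv_lt_0_compat; lra).
  assert (Hsx := abs_sin_le_sin _ x Hhalf Hx).
  destruct (Z.eq_dec r 0) as [Hr0|Hr0].
  - rewrite Hr0. replace (x + IZR 0 * PI / INR K) with x by (simpl; field; lra). lra.
  - assert (Hr : 1 <= IZR r <= INR K - 1).
    { rewrite INR_IZR_INZ, <- minus_IZR. split; apply IZR_le; lia. }
    assert (Hy : PI / (2 * INR K) <= x + IZR r * PI / INR K <= PI - PI / (2 * INR K)).
    { assert (Hstep : PI / INR K = 2 * (PI / (2 * INR K))) by (field; lra).
      assert (- (PI / (2 * INR K)) <= x <= PI / (2 * INR K)) by (split_Rabs; lra).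
      replace (IZR r * PI / INR K) with (IZR r * (PI / INR K)) by (field; lra).
      replace (PI - PI / (2 * INR K)) with ((INR K - 1) * (PI / INR K) + PI / (2 * INR K))
        by (field; lra).
      rewrite Hstep. split; nra. }
    pose proof (sin_le_on_middle _ _ (conj (Rlt_le _ _ Hh0) Hhalf) Hy).
    pose proof (Rle_abs (sin (x + IZR r * PI / INR K))). lra.
Qed.

Lemma cos_add_abs_sin_sq t : 0 <= cos t ->
  (cos t + Rabs (sin t)) * (cos t + Rabs (sin t)) = 1 + Rabs (sin (2 * t)).
Proof.
  intro Hc. rewrite sin_2a, !Rabs_mult, (Rabs_pos_eq (cos t)), (Rabs_pos_eq 2) by lra.
  assert (Rabs (sin t) * Rabs (sin t) = sin t * sin t)
    by (rewrite <- Rabs_mult; apply Rabs_pos_eq; nra).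
  pose proof (sin_cos_sq t). nra.
Qed.

Lemma cos_add_abs_sin_le s t : 0 <= cos s -> 0 <= cos t ->
  Rabs (sin (2 * s)) <= Rabs (sin (2 * t)) -> cos s + Rabs (sin s) <= cos t + Rabs (sin t).
Proof.
  intros Hs Ht Hst. pose proof (Rabs_pos (sin s)). pose proof (Rabs_pos (sin t)).
  apply Rsqr_incr_0; [unfold Rsqr; rewrite !cos_add_abs_sin_sq by lra; lra | lra | lra].
Qed.

Definition along (A : R) (v : pt) : R := dot v (cos A, sin A).
Definition across (A : R) (v : pt) : R := cross (cos A, sin A) v.
Definition norm (v : pt) : R := sqrt (dot v v).

Lemma norm_nonneg v : 0 <= norm v.
Proof. apply sqrt_pos. Qed.

Lemma norm_sq v : norm v * norm v = dot v v.
Proof. apply sqrt_sqrt. unfold dot. nra. Qed.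

Lemma norm_pos v : v <> (0, 0) -> 0 < norm v.
Proof.
  intro Hv. apply sqrt_lt_R0. unfold dot. destruct v as [x y]; simpl.
  destruct (Req_dec x 0), (Req_dec y 0); subst; [congruence | nra | nra | nra].
Qed.

Lemma edist_norm u v : edist u v = norm (sub v u).
Proof. unfold edist, norm, dot, sub; simpl. f_equal. ring. Qed.

Lemma sub_neq_0 u v : v <> u -> sub v u <> (0, 0).
Proof.
  intros Hvu H. apply Hvu. destruct u, v. unfold sub in H; simpl in H.
  injection H. intros. f_equal; lra.
Qed.

Lemma along_sq_add_across_sq A v :
  along A v * along A v + across A v * across A v = norm v * norm v.
Proof.
  rewrite norm_sq. unfold along, across, dot, cross; simpl.
  pose proof (sin_cos_sq A). nra.
Qed.

Lemma along_sub_angle A d v : along (A - d) v = along A v * cos d - across A v * sin d.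
Proof. unfold along, across, dot, cross; simpl. rewrite cos_minus, sin_minus. ring. Qed.

Lemma across_sub_angle A d v : across (A - d) v = across A v * cos d + along A v * sin d.
Proof. unfold along, across, dot, cross; simpl. rewrite cos_minus, sin_minus. ring. Qed.

Lemma along_chasles A u a w : along A (sub w a) = along A (sub w u) - along A (sub a u).
Proof. unfold along, dot, sub; simpl. ring. Qed.

Lemma across_chasles A u a w : across A (sub w a) = across A (sub w u) - across A (sub a u).
Proof. unfold across, cross, sub; simpl. ring. Qed.

Lemma along_polar A v : exists b, - PI <= b <= PI /\
  along A v = norm v * cos b /\ across A v = norm v * sin b.
Proof.
  pose proof (along_sq_add_across_sq A v) as Hsq. pose proof (norm_nonneg v).
  destruct (Req_dec (norm v) 0) as [H0|H0].
  - exists 0. rewrite H0 in *. pose proof PI_RGT_0. repeat split; nra.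
  - destruct (polar_angle (along A v / norm v) (across A v / norm v)) as [b [Hb [Hc Hs]]].
    { replace (along A v / norm v * (along A v / norm v) + across A v / norm v * (across A v / norm v))
        with ((along A v * along A v + across A v * across A v) / (norm v * norm v)) by (field; lra).
      rewrite Hsq. field. lra. }
    exists b. rewrite Hc, Hs. repeat split; try lra; field; lra.
Qed.

Lemma abs_across_le A v c s : c * c + s * s = 1 -> 0 <= c -> 0 <= s ->
  along A v >= norm v * c -> Rabs (across A v) <= norm v * s.
Proof.
  intros Hcs Hc Hs Halong. pose proof (along_sq_add_across_sq A v). pose proof (norm_nonneg v).
  rewrite <- (Rabs_pos_eq (norm v * s)) by nra. apply Rsqr_le_abs_0. unfold Rsqr.
  assert (norm v * c * (norm v * c) <= along A v * along A v) by (apply Rmult_le_compat; nra).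
  nra.
Qed.

(* Writing [along = r cos b] and [across = r sin b], squaring compares
   [|sin (2 b)|] with [|sin (2 b + n PI / K)|]: this is where [m = 4 K] is used. *)
Lemma along_add_abs_across_le (K : nat) (n : Z) A v : (1 <= K)%nat ->
  along A v >= norm v * cos (PI / (4 * INR K)) ->
  0 <= along (A - IZR n * (PI / (2 * INR K))) v ->
  along A v + Rabs (across A v) <=
  along (A - IZR n * (PI / (2 * INR K))) v + Rabs (across (A - IZR n * (PI / (2 * INR K))) v).
Proof.
  intros HK Hcone Hpos. set (d := IZR n * (PI / (2 * INR K))) in *.
  destruct (along_polar A v) as [b [Hb [Hal Hac]]].
  rewrite along_sub_angle, across_sub_angle, Hal, Hac in *.
  pose proof (norm_nonneg v) as Hr. set (r := norm v) in *.
  replace (r * cos b * cos d - r * sin b * sin d) with (r * cos (b + d)) in *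
    by (rewrite cos_plus; ring).
  replace (r * sin b * cos d + r * cos b * sin d) with (r * sin (b + d))
    by (rewrite sin_plus; ring).
  rewrite !Rabs_mult, !(Rabs_pos_eq r) by exact Hr.
  destruct (Req_dec r 0) as [Hr0|Hr0]; [rewrite Hr0; lra|].
  pose proof PI_RGT_0.
  assert (HK1 : 1 <= INR K) by (apply (le_INR 1); lia).
  assert (Hphi : 0 <= PI / (4 * INR K) <= PI / 4).
  { split; [apply Rlt_le, Rdiv_lt_0_compat; lra|].
    apply Rmult_le_compat_l; [lra|]. apply Rinv_le_contravar; lra. }
  assert (Hb_cone : Rabs b <= PI / (4 * INR K)).
  { apply abs_le_of_cos_le; [lra | split_Rabs; lra |].
    apply (Rmult_le_reg_l r); lra. }
  assert (Hcos_b : 0 <= cos b) by (apply cos_ge_0; split_Rabs; lra).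
  assert (Hcos_bd : 0 <= cos (b + d)) by (apply (Rmult_le_reg_l r); lra).
  assert (Hsin2 : Rabs (sin (2 * b)) <= Rabs (sin (2 * (b + d)))).
  { replace (2 * (b + d)) with (2 * b + IZR n * PI / INR K) by (unfold d; field; lra).
    apply abs_sin_le_shift; [exact HK|].
    rewrite Rabs_mult, (Rabs_pos_eq 2) by lra.
    replace (PI / (2 * INR K)) with (2 * (PI / (4 * INR K))) by (field; lra). lra. }
  pose proof (cos_add_abs_sin_le b (b + d) Hcos_b Hcos_bd Hsin2). nra.
Qed.

Lemma proj_along m i u v : proj m i u v = along (bis_angle m i) (sub v u).
Proof. reflexivity. Qed.

Lemma in_cone_along m i u v : in_cone m i u v ->
  along (bis_angle m i) (sub v u) >= norm (sub v u) * cos (theta m / 2).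
Proof. intros (_ & _ & H). rewrite <- edist_norm. exact H. Qed.

Lemma bis_angle_shift m i j :
  bis_angle m i = bis_angle m j - IZR (Z.of_nat i - Z.of_nat j) * theta m.
Proof. unfold bis_angle. rewrite minus_IZR, <- !INR_IZR_INZ. ring. Qed.

Lemma theta_4K K : (1 <= K)%nat -> theta (4 * K) = PI / (2 * INR K).
Proof.
  intro HK. assert (1 <= INR K) by (apply (le_INR 1); lia).
  unfold theta. rewrite mult_INR. simpl. field. lra.
Qed.

Lemma half_theta_4K_facts K : (2 <= K)%nat ->
  0 < sin (theta (4 * K) / 2) < cos (theta (4 * K) / 2) /\
  cos (theta (4 * K) / 2) * cos (theta (4 * K) / 2) +
  sin (theta (4 * K) / 2) * sin (theta (4 * K) / 2) = 1.
Proof.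
  intro HK. assert (HK2 : 2 <= INR K) by (apply (le_INR 2); lia).
  rewrite theta_4K by lia. pose proof PI_RGT_0.
  replace (PI / (2 * INR K) / 2) with (PI / (4 * INR K)) by (field; lra).
  assert (Hphi : 0 < PI / (4 * INR K) <= PI / 8).
  { split; [apply Rdiv_lt_0_compat; lra|].
    apply Rmult_le_compat_l; [lra|]. apply Rinv_le_contravar; lra. }
  pose proof (sin_cos_sq (PI / (4 * INR K))).
  split; [|lra]. split; [apply sin_gt_0; lra|].
  rewrite <- sin_shift. apply sin_increasing_1; lra.
Qed.

Definition theta_bound (m i : nat) (u w : pt) : R :=
  (proj m i u w + Rabs (across (bis_angle m i) (sub w u))) /
  (cos (theta m / 2) - sin (theta m / 2)).

Lemma edist_le_theta_bound K i u w : (2 <= K)%nat -> in_cone (4 * K) i u w ->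
  edist u w <= theta_bound (4 * K) i u w.
Proof.
  intros HK Hw. destruct (half_theta_4K_facts K HK) as [[Hs Hsc] Hcs].
  pose proof (in_cone_along _ _ _ _ Hw) as Hal.
  pose proof (norm_nonneg (sub w u)). pose proof (Rabs_pos (across (bis_angle (4 * K) i) (sub w u))).
  unfold theta_bound. rewrite proj_along, edist_norm.
  apply (Rmult_le_reg_r (cos (theta (4 * K) / 2) - sin (theta (4 * K) / 2))); [lra|].
  unfold Rdiv. rewrite Rmult_assoc, Rinv_l, Rmult_1_r by lra. nra.
Qed.

Lemma stretch_bound_eq K i u w : (2 <= K)%nat -> in_cone (4 * K) i u w ->
  stretch_bound (4 * K) (alpha_angle (4 * K) i u w) * edist u w = theta_bound (4 * K) i u w.
Proof.
  intros HK Hw. destruct (half_theta_4K_facts K HK) as [[Hs Hsc] Hcs].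
  assert (Hd : 0 < edist u w)
    by (rewrite edist_norm; apply norm_pos, sub_neq_0; apply Hw).
  pose proof (along_sq_add_across_sq (bis_angle (4 * K) i) (sub w u)) as Hsq.
  rewrite <- edist_norm, <- proj_along in Hsq.
  unfold stretch_bound, alpha_angle, theta_bound, tan.
  set (d := edist u w) in *. set (H := proj (4 * K) i u w) in *.
  set (X := across (bis_angle (4 * K) i) (sub w u)) in *.
  set (c := cos (theta (4 * K) / 2)) in *. set (s := sin (theta (4 * K) / 2)) in *.
  assert (Hy : -1 <= H / d <= 1).
  { split; apply (Rmult_le_reg_r d); try lra; unfold Rdiv;
      rewrite Rmult_assoc, Rinv_l, Rmult_1_r by lra; nra. }
  rewrite cos_acos, sin_acos by exact Hy.
  replace (1 - (H / d)²) with ((X / d)²)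
    by (unfold Rsqr; replace (X / d * (X / d)) with ((H * H + X * X - H * H) / (d * d))
          by (field; lra); rewrite Hsq; field; lra).
  rewrite sqrt_Rsqr_abs.
  replace (Rabs (X / d)) with (Rabs X / d)
    by (unfold Rdiv; rewrite Rabs_mult, Rabs_inv, (Rabs_pos_eq d); lra).
  field. lra.
Qed.

(* Frame [j] is optimal for [w - a]; in frame [i], [w - a = (w - u) - (a - u)]
   where [a - u] contributes at least [|ua| cos] along the bisector and at most
   [|ua| sin] across it. *)
Lemma theta_bound_step K i j u a w : (2 <= K)%nat ->
  in_cone (4 * K) i u a -> in_cone (4 * K) j a w ->
  proj (4 * K) i u a <= proj (4 * K) i u w ->
  edist u a + theta_bound (4 * K) j a w <= theta_bound (4 * K) i u w.
Proof.
  intros HK Ha Hw Hle. destruct (half_theta_4K_facts K HK) as [[Hs Hsc] Hcs].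
  assert (Hframe : along (bis_angle (4 * K) j) (sub w a) + Rabs (across (bis_angle (4 * K) j) (sub w a))
    <= along (bis_angle (4 * K) i) (sub w a) + Rabs (across (bis_angle (4 * K) i) (sub w a))).
  { rewrite (bis_angle_shift _ i j), theta_4K by lia. apply along_add_abs_across_le; [lia| |].
    - pose proof (in_cone_along _ _ _ _ Hw) as H. rewrite theta_4K in H by lia.
      replace (PI / (2 * INR K) / 2) with (PI / (4 * INR K)) in H
        by (field; apply not_0_INR; lia).
      exact H.
    - rewrite <- theta_4K, <- bis_angle_shift, (along_chasles _ u), <- !proj_along by lia. lra. }
  pose proof (in_cone_along _ _ _ _ Ha) as Hal.
  assert (Hac : Rabs (across (bis_angle (4 * K) i) (sub a u)) <= norm (sub a u) * sin (theta (4 * K) / 2))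
    by (apply (abs_across_le _ _ (cos (theta (4 * K) / 2))); lra).
  rewrite (along_chasles (bis_angle (4 * K) i) u), (across_chasles (bis_angle (4 * K) i) u) in Hframe.
  pose proof (Rabs_sub_le (across (bis_angle (4 * K) i) (sub w u))
                          (across (bis_angle (4 * K) i) (sub a u))).
  rewrite <- !proj_along, <- edist_norm in *.
  unfold theta_bound. set (c := cos (theta (4 * K) / 2)) in *. set (s := sin (theta (4 * K) / 2)) in *.
  replace (edist u a + (proj (4 * K) j a w + Rabs (across (bis_angle (4 * K) j) (sub w a))) / (c - s))
    with ((proj (4 * K) j a w + Rabs (across (bis_angle (4 * K) j) (sub w a)) + edist u a * (c - s))
          / (c - s)) by (field; lra).
  unfold Rdiv. apply Rmult_le_compat_r; [apply Rlt_le, Rinv_0_lt_compat; lra | nra].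
Qed.

Lemma nat_floor_exists th N t : 0 < th -> 0 <= t < INR N * th ->
  exists n, (n < N)%nat /\ INR n * th <= t < (INR n + 1) * th.
Proof.
  intros Hth [Ht HN]. induction N as [|N IH]; [simpl in HN; lra|].
  destruct (Rlt_dec t (INR N * th)) as [Hl|Hl].
  - destruct (IH Hl) as [n [Hn1 Hn2]]. exists n. split; [lia | exact Hn2].
  - exists N. split; [lia|]. rewrite S_INR in HN. lra.
Qed.

Lemma in_cone_exists m u v : (2 <= m)%nat -> v <> u -> exists j, in_cone m j u v.
Proof.
  intros Hm Hvu. pose proof PI_RGT_0.
  assert (Hm2 : 2 <= INR m) by (apply (le_INR 2); lia).
  assert (Hth : 0 < theta m) by (apply Rdiv_lt_0_compat; lra).
  assert (Hmth : INR m * theta m = 2 * PI) by (unfold theta; field; lra).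
  assert (Hphi : theta m / 2 <= PI / 2).
  { unfold theta. replace (2 * PI / INR m / 2) with (PI / INR m) by (field; lra).
    apply Rmult_le_compat_l; [lra|]. apply Rinv_le_contravar; lra. }
  destruct (along_polar (PI / 2) (sub v u)) as [g [Hg [Hal Hac]]].
  set (r := norm (sub v u)) in *.
  set (t := if Rle_dec 0 (theta m / 2 - g) then theta m / 2 - g else theta m / 2 - g + 2 * PI).
  assert (Ht : 0 <= t < INR m * theta m /\
    (t = theta m / 2 - g \/ t = theta m / 2 - g + 2 * PI)).
  { unfold t. destruct (Rle_dec 0 (theta m / 2 - g)); lra. }
  destruct Ht as [Ht Hteq].
  destruct (nat_floor_exists (theta m) m t Hth Ht) as [j [Hj Hjt]].
  exists j. split; [exact Hj|]. split; [exact Hvu|].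
  rewrite proj_along, edist_norm.
  replace (bis_angle m j) with (PI / 2 - INR j * theta m) by reflexivity.
  rewrite along_sub_angle, Hal, Hac.
  replace (r * cos g * cos (INR j * theta m) - r * sin g * sin (INR j * theta m))
    with (r * cos (g + INR j * theta m)) by (rewrite cos_plus; ring).
  apply Rle_ge, Rmult_le_compat_l; [apply norm_nonneg|].
  set (x := theta m / 2 - (t - INR j * theta m)).
  assert (Hx : Rabs x <= theta m / 2) by (unfold x; split_Rabs; lra).
  destruct Hteq as [Hteq|Hteq].
  - replace (g + INR j * theta m) with x by (unfold x; lra).
    apply cos_le_of_abs_le; lra.
  - replace (g + INR j * theta m) with (x + 2 * INR 1 * PI) by (unfold x; simpl; lra).
    rewrite cos_period. apply cos_le_of_abs_le; lra.
Qed.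

Lemma exists_argmin_in {A : Type} (L : list A) (Q : A -> Prop) (f : A -> R) :
  (exists x, In x L /\ Q x) ->
  exists a, In a L /\ Q a /\ forall v, In v L -> Q v -> f a <= f v.
Proof.
  induction L as [|y L IH]; intros [x [Hx HQ]]; [destruct Hx|].
  destruct (classic (exists x, In x L /\ Q x)) as [Hex|Hnex].
  - destruct (IH Hex) as [a [Ha [HQa Hmin]]].
    destruct (classic (Q y /\ f y <= f a)) as [Hy|Hy].
    + exists y. split; [now left|]. split; [tauto|].
      intros v [<-|Hv] HQv; [lra|]. specialize (Hmin v Hv HQv). lra.
    + exists a. split; [now right|]. split; [exact HQa|].
      intros v [<-|Hv] HQv; [|exact (Hmin v Hv HQv)].
      destruct (Rle_dec (f y) (f a)); [tauto | lra].
  - destruct Hx as [<-|Hx]; [|exfalso; apply Hnex; now exists x].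
    exists y. split; [now left|]. split; [exact HQ|].
    intros v [<-|Hv] HQv; [lra|]. exfalso. apply Hnex. now exists v.
Qed.

Lemma theta_edge_closest m P u w i : In u P -> In w P -> in_cone m i u w ->
  exists a, In a P /\ in_cone m i u a /\ theta_edge m P u a /\ proj m i u a <= proj m i u w.
Proof.
  intros Hu Hw Hc.
  destruct (exists_argmin_in P (in_cone m i u) (proj m i u)) as [a [Ha [Hca Hmin]]];
    [now exists w|].
  exists a. split; [exact Ha|]. split; [exact Hca|].
  split; [split; [exact Hu | left; now exists i] | exact (Hmin w Hw Hc)].
Qed.

Lemma last_cons_eq {A : Type} (a : A) l d : last (a :: l) d = last l a.
Proof.
  revert a d. induction l as [|b l IH]; intros a d; [reflexivity|].
  change (last (b :: l) d = last (b :: l) a). now rewrite !IH.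
Qed.

Lemma last_app_eq {A : Type} (l1 l2 : list A) d : last (l1 ++ l2) d = last l2 (last l1 d).
Proof.
  revert d. induction l1 as [|a l1 IH]; intro d; [reflexivity|].
  simpl app. now rewrite !last_cons_eq.
Qed.

Lemma path_length_app x l1 l2 :
  path_length x (l1 ++ l2) = path_length x l1 + path_length (last l1 x) l2.
Proof.
  revert x. induction l1 as [|a l1 IH]; intro x; [simpl; ring|].
  simpl app. rewrite last_cons_eq. simpl. rewrite IH. ring.
Qed.

Lemma path_length_nonneg x l : 0 <= path_length x l.
Proof.
  revert x. induction l as [|a l IH]; intro x; simpl; [lra|].
  pose proof (sqrt_pos (dot (sub x a) (sub x a))). pose proof (IH a). unfold edist. lra.
Qed.

Lemma walk_app_r E x l1 l2 : walk E x (l1 ++ l2) -> walk E (last l1 x) l2.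
Proof.
  revert x. induction l1 as [|a l1 IH]; intros x H; [exact H|].
  rewrite last_cons_eq. apply IH, H.
Qed.

Lemma walk_loop_erase E u l : walk E u l ->
  exists l', walk E u l' /\ NoDup (u :: l') /\ last l' u = last l u /\
    path_length u l' <= path_length u l.
Proof.
  revert u. induction l as [|y l IH]; intros u Hw.
  - exists nil. repeat split; [constructor; [easy | constructor] | lra].
  - destruct Hw as [Huy Hw]. destruct (IH y Hw) as [l' [Hw' [Hnd [Hl Hlen]]]].
    rewrite last_cons_eq. simpl path_length.
    pose proof (sqrt_pos (dot (sub u y) (sub u y))). unfold edist.
    destruct (classic (In u (y :: l'))) as [[<-|Hin]|Hnin].
    + exists l'. repeat split; auto. lra.
    + destruct (in_split u l' Hin) as [l1 [l2 ->]]. exists l2. split; [|split; [|split]].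
      * apply walk_app_r in Hw'. apply Hw'.
      * apply NoDup_cons_iff in Hnd. apply (NoDup_app_remove_l l1), Hnd.
      * rewrite <- Hl, last_app_eq, last_cons_eq. reflexivity.
      * rewrite path_length_app in Hlen. simpl in Hlen. unfold edist in Hlen.
        pose proof (path_length_nonneg y l1).
        pose proof (sqrt_pos (dot (sub (last l1 y) u) (sub (last l1 y) u))). lra.
    + exists (y :: l'). split; [split; assumption|]. split; [constructor; assumption|].
      split; [rewrite last_cons_eq; exact Hl|]. simpl. unfold edist. lra.
Qed.

Definition count_below (L : list R) (B : R) : nat :=
  length (filter (fun x => if Rlt_dec x B then true else false) L).

Lemma count_below_lt L x B : In x L -> x < B -> (count_below L x < count_below L B)%nat.
Proof.
  intros Hx HxB. unfold count_below. induction L as [|y L IH]; [destruct Hx|].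
  assert (Hmono : forall L', (length (filter (fun z => if Rlt_dec z x then true else false) L')
                  <= length (filter (fun z => if Rlt_dec z B then true else false) L'))%nat).
  { induction L' as [|z L' IH']; simpl; [lia|].
    destruct (Rlt_dec z x), (Rlt_dec z B); simpl; lra || lia. }
  simpl. destruct Hx as [->|Hx].
  - destruct (Rlt_dec x x); [lra|]. destruct (Rlt_dec x B); [|lra]. simpl. specialize (Hmono L). lia.
  - specialize (IH Hx). destruct (Rlt_dec y x), (Rlt_dec y B); simpl; lra || lia.
Qed.

Definition theta_bounds (m : nat) (P : list pt) : list R :=
  map (fun t => theta_bound m (snd t) (fst (fst t)) (snd (fst t)))
      (list_prod (list_prod P P) (seq 0 m)).

Lemma in_theta_bounds m P i u w : In u P -> In w P -> (i < m)%nat ->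
  In (theta_bound m i u w) (theta_bounds m P).
Proof.
  intros Hu Hw Hi. apply (in_map (fun t => theta_bound m (snd t) (fst (fst t)) (snd (fst t))) _ ((u, w), i)).
  apply in_prod; [apply in_prod; assumption|]. apply in_seq. lia.
Qed.

Lemma theta_walk_within_bound K P i u w : (2 <= K)%nat -> In u P -> In w P ->
  in_cone (4 * K) i u w ->
  exists l, walk (theta_edge (4 * K) P) u l /\ last l u = w /\
    path_length u l <= theta_bound (4 * K) i u w.
Proof.
  intros HK Hu Hw Hc.
  remember (count_below (theta_bounds (4 * K) P) (theta_bound (4 * K) i u w)) as n eqn:Hn.
  revert i u Hu Hc Hn. induction n as [n IH] using lt_wf_ind. intros i u Hu Hc Hn.
  destruct (theta_edge_closest _ _ _ _ _ Hu Hw Hc) as (a & Ha & Hca & Hedge & Hproj).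
  destruct (classic (a = w)) as [<-|Haw].
  - exists (a :: nil). split; [split; [exact Hedge | exact I]|]. split; [reflexivity|].
    pose proof (edist_le_theta_bound _ _ _ _ HK Hc). cbn [path_length]. lra.
  - destruct (in_cone_exists (4 * K) a w ltac:(lia) (not_eq_sym Haw)) as [j Hj].
    pose proof (theta_bound_step _ _ _ _ _ _ HK Hca Hj Hproj) as Hstep.
    assert (Hua : 0 < edist u a) by (rewrite edist_norm; apply norm_pos, sub_neq_0, Hca).
    assert (Hcount : (count_below (theta_bounds (4 * K) P) (theta_bound (4 * K) j a w) < n)%nat).
    { subst n. apply count_below_lt; [apply in_theta_bounds; [exact Ha | exact Hw | apply Hj] | lra]. }
    destruct (IH _ Hcount j a Ha Hj eq_refl) as (l & Hwl & Hl & Hlen).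
    exists (a :: l). split; [split; assumption|]. split; [rewrite last_cons_eq; exact Hl|].
    cbn [path_length]. lra.
Qed.

Theorem mainTheorem8 :
  forall (k : nat) (P : list pt) (u w : pt) (i : nat),
    (1 <= k)%nat ->
    NoDup P ->
    general_position (4 * k + 4) P ->
    In u P -> In w P -> u <> w ->
    in_cone (4 * k + 4) i u w ->
    exists l : list pt,
      theta_path (4 * k + 4) P u w l /\
      path_length u l <=
        stretch_bound (4 * k + 4) (alpha_angle (4 * k + 4) i u w) * edist u w.
Proof.
  intros k P u w i Hk _ _ Hu Hw _ Hc.
  replace (4 * k + 4)%nat with (4 * S k)%nat in * by lia.
  destruct (theta_walk_within_bound (S k) P i u w ltac:(lia) Hu Hw Hc) as (l & Hwalk & Hl & Hlen).
  destruct (walk_loop_erase _ u l Hwalk) as (l' & Hwalk' & Hnd & Hl' & Hlen').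
  exists l'. split; [split; [exact Hwalk' | split; [exact Hnd | congruence]]|].
  rewrite stretch_bound_eq by (assumption || lia). lra.
Qed.
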